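(* Let $n\ge 3$ and let $\mathcal{P}=(V_0,\dots,V_{n-1})$ be an $n$-gon. Then $\mathcal{P}$ is strictly convex if and only if $\mathcal{P}$ is c-strictly monotone, i.e. if and only if $\mathcal{P}$ is locally-ordinary and, writing $(\alpha_0,\dots,\alpha_{n-1})=\arg\mathcal{P}$, there is $k\in\{0,\dots,n-1\}$ with either $\alpha_k<\dots<\alpha_{n-1}<\alpha_0<\dots<\alpha_{k-1}$ or $\alpha_k>\dots>\alpha_{n-1}>\alpha_0>\dots>\alpha_{k-1}$ (for $k=0$ these chains read $\alpha_0<\dots<\alpha_{n-1}$, resp. $\alpha_0>\dots>\alpha_{n-1}$).
   Context: A polygon (or $n$-gon) is any finite sequence $\mathcal{P}=(V_0,\dots,V_{n-1})$ of points of $\mathbb{R}^2$; indices are taken cyclically, $V_n:=V_0$. Its edges are the segments $[V_i,V_{i+1}]=\operatorname{conv}\{V_i,V_{i+1}\}$, $i\in\{0,\dots,n-1\}$, and $\operatorname{conv}\mathcal{P}:=\operatorname{conv}\{V_0,\dots,V_{n-1}\}$. $\mathcal{P}$ is convex if $\bigcup_{i=0}^{n-1}[V_i,V_{i+1}]=\partial\operatorname{conv}\mathcal{P}$. $\mathcal{P}$ is strict if for any three distinct indices $i,j,k$ the points $V_i,V_j,V_k$ are non-collinear; strictly convex means strict and convex. $\mathcal{P}$ is locally-ordinary if $V_i\ne V_{i+1}$ for all $i\in\{0,\dots,n-1\}$. For a nonzero vector $\vec v=(x,y)$ with $r=\sqrt{x^2+y^2}$, $\arg\vec v$ is the unique $\psi\in[0,2\pi)$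 with $x=r\cos\psi$, $y=r\sin\psi$. For a locally-ordinary polygon, $\arg\mathcal{P}:=(\arg(V_1-V_0),\dots,\arg(V_n-V_{n-1}))$. The notions c-increasing / c-decreasing / c-strictly monotone are defined only for locally-ordinary polygons, as in the claim. *)

From Stdlib Require Import Reals Lra ClassicalEpsilon.
Open Scope R_scope.

Definition point : Type := (R * R)%type.

(* An n-gon (V_0,...,V_{n-1}) is given by P : nat -> point, of which only
   the values P 0, ..., P (n-1) matter; indices are taken cyclically. *)
Definition vtx (n : nat) (P : nat -> point) (i : nat) : point := P (i mod n)%nat.

Fixpoint sumR (m : nat) (f : nat -> R) : R :=
  match m with
  | O => 0
  | S k => sumR k f + f k
  end.

Definition segment (A B : point) (X : point) : Prop :=
  exists t, 0 <= t <= 1 /\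
    fst X = (1 - t) * fst A + t * fst B /\
    snd X = (1 - t) * snd A + t * snd B.

Definition conv_hull (n : nat) (P : nat -> point) (X : point) : Prop :=
  exists lam : nat -> R,
    (forall i, (i < n)%nat -> 0 <= lam i) /\
    sumR n lam = 1 /\
    fst X = sumR n (fun i => lam i * fst (P i)) /\
    snd X = sumR n (fun i => lam i * snd (P i)).

Definition dist2 (X Y : point) : R :=
  (fst X - fst Y) ^ 2 + (snd X - snd Y) ^ 2.

Definition boundary (S : point -> Prop) (X : point) : Prop :=
  forall eps, 0 < eps ->
    (exists Y, S Y /\ dist2 X Y < eps ^ 2) /\
    (exists Y, ~ S Y /\ dist2 X Y < eps ^ 2).

Definition is_convex (n : nat) (P : nat -> point) : Prop :=
  forall X,
    (exists i, (i < n)%nat /\ segment (vtx n P i) (vtx n P (S i)) X)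
    <-> boundary (conv_hull n P) X.

Definition collinear (A B C : point) : Prop :=
  exists a b c, (a <> 0 \/ b <> 0) /\
    a * fst A + b * snd A = c /\
    a * fst B + b * snd B = c /\
    a * fst C + b * snd C = c.

Definition is_strict (n : nat) (P : nat -> point) : Prop :=
  forall i j k, (i < n)%nat -> (j < n)%nat -> (k < n)%nat ->
    i <> j -> j <> k -> i <> k -> ~ collinear (P i) (P j) (P k).

Definition strictly_convex (n : nat) (P : nat -> point) : Prop :=
  is_strict n P /\ is_convex n P.

Definition locally_ordinary (n : nat) (P : nat -> point) : Prop :=
  forall i, (i < n)%nat -> vtx n P i <> vtx n P (S i).

Definition arg (v : point) : R :=
  epsilon (inhabits 0) (fun psi =>
    0 <= psi < 2 * PI /\
    fst v = sqrt (fst v ^ 2 + snd v ^ 2) * cos psi /\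
    snd v = sqrt (fst v ^ 2 + snd v ^ 2) * sin psi).

Definition argP (n : nat) (P : nat -> point) (i : nat) : R :=
  arg (fst (vtx n P (S i)) - fst (vtx n P i), snd (vtx n P (S i)) - snd (vtx n P i)).

Definition c_strictly_monotone (n : nat) (P : nat -> point) : Prop :=
  locally_ordinary n P /\
  exists k, (k < n)%nat /\
    ((forall j, (j + 1 < n)%nat ->
        argP n P ((k + j) mod n) < argP n P ((k + j + 1) mod n)) \/
     (forall j, (j + 1 < n)%nat ->
        argP n P ((k + j) mod n) > argP n P ((k + j + 1) mod n))).

From Stdlib Require Import Reals Lra Lia Psatz ClassicalEpsilon Classical.
Open Scope R_scope.

(* Both conditions are equivalent to convex position with an orientation s = 1 or
   s = -1: for every edge [V_i, V_(i+1)], all other vertices lie strictly on the side s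
   of its line.

   In convex position, conv P is the intersection of the closed half-planes bounded by
   the edge lines, so its boundary is the union of the edges; and no three vertices are
   collinear, since the line of the edge leaving the middle one would separate the
   other two. Conversely, if a strictly convex polygon had vertices on both sides of an
   edge line, the midpoint of that edge would be interior to conv P.

   In convex position consecutive edges turn in the direction s, so s * alpha_i
   increases at every step except where the edge direction crosses argument 0. This
   happens at some step since the cycle closes, and at only one, because all other
   vertices lie strictly above (for s = 1) the vertex where it happens. Conversely, if
   s * alpha increases once around the cycle, then
   s * cross (e_i) (e_(i+m)) = |e_i| |e_(i+m)| sin (s alpha_(i+m) - s alpha_i)
   is first positive and then negative for m = 1, ..., n - 1, and sums to 0 over
   m < n; so its proper partial sums s * cross (e_i) (V_j - V_i) are positive. *)

(** * Vectors and polar angles *)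

Definition vsub (A B : point) : point := (fst A - fst B, snd A - snd B).
Definition cross (u v : point) : R := fst u * snd v - snd u * fst v.
Definition dot (u v : point) : R := fst u * fst v + snd u * snd v.
Definition vnorm (v : point) : R := sqrt (fst v ^ 2 + snd v ^ 2).

Lemma cross_anticomm u v : cross v u = - cross u v.
Proof. unfold cross; ring. Qed.

Lemma sqnorm_pos (v : point) : v <> (0, 0) -> 0 < fst v ^ 2 + snd v ^ 2.
Proof.
  destruct v as [x y]; simpl; intro Hv.
  destruct (Req_dec x 0), (Req_dec y 0); subst; [now exfalso; apply Hv | nra ..].
Qed.

Lemma vnorm_pos v : v <> (0, 0) -> 0 < vnorm v.
Proof. intro Hv. apply sqrt_lt_R0, sqnorm_pos, Hv. Qed.

Lemma polar_angle_exists v : v <> (0, 0) -> exists psi,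
  0 <= psi < 2 * PI /\ fst v = vnorm v * cos psi /\ snd v = vnorm v * sin psi.
Proof.
  intro Hv. pose proof (vnorm_pos v Hv) as Hr.
  assert (Hr2 : vnorm v * vnorm v = fst v ^ 2 + snd v ^ 2) by (apply sqrt_sqrt; nra).
  set (r := vnorm v) in *. destruct v as [x y]; simpl in *.
  set (c := x / r).
  assert (Hc : -1 <= c <= 1).
  { unfold c; split; apply (Rmult_le_reg_r r); auto; field_simplify; nra. }
  assert (Hs : sqrt (1 - c²) = Rabs y / r).
  { apply sqrt_lem_1; unfold Rsqr.
    - nra.
    - apply Rmult_le_pos; [apply Rabs_pos | left; apply Rinv_0_lt_compat, Hr].
    - replace (Rabs y / r * (Rabs y / r)) with (Rabs (y * y) / (r * r))
        by (rewrite Rabs_mult; field; lra).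
      rewrite Rabs_right by nra. unfold c.
      apply (Rmult_eq_reg_r (r * r)); [| nra]. field_simplify; [nra | lra ..]. }
  pose proof (acos_bound c). pose proof PI_RGT_0.
  destruct (Rle_lt_dec 0 y) as [Hy | Hy].
  - exists (acos c). rewrite cos_acos, sin_acos, Hs, Rabs_right by (auto; lra).
    split; [lra | unfold c; split; field; lra].
  - assert (acos c <> 0).
    { intro Hz. assert (Hc1 : cos (acos c) = 1) by (rewrite Hz; apply cos_0).
      rewrite cos_acos in Hc1 by auto.
      assert (Hx : x = c * r) by (unfold c; field; lra). rewrite Hc1 in Hx. nra. }
    exists (2 * PI - acos c).
    rewrite cos_minus, sin_minus, cos_2PI, sin_2PI, cos_acos, sin_acos, Hs, Rabs_left
      by (auto; lra).
    split; [lra | unfold c; split; field; lra].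
Qed.

Lemma arg_spec v : v <> (0, 0) ->
  0 <= arg v < 2 * PI /\ fst v = vnorm v * cos (arg v) /\ snd v = vnorm v * sin (arg v).
Proof.
  intro Hv. unfold arg.
  apply (epsilon_spec (inhabits 0) (fun psi => 0 <= psi < 2 * PI /\
    fst v = sqrt (fst v ^ 2 + snd v ^ 2) * cos psi /\
    snd v = sqrt (fst v ^ 2 + snd v ^ 2) * sin psi)).
  exact (polar_angle_exists v Hv).
Qed.

Lemma cross_polar u v : u <> (0, 0) -> v <> (0, 0) ->
  cross u v = vnorm u * vnorm v * sin (arg v - arg u).
Proof.
  intros Hu Hv. destruct (arg_spec u Hu) as [_ [Hu1 Hu2]], (arg_spec v Hv) as [_ [Hv1 Hv2]].
  unfold cross. rewrite Hu1, Hu2, Hv1, Hv2, sin_minus. ring.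
Qed.

Lemma oriented_cross_polar s u v : s = 1 \/ s = -1 -> u <> (0, 0) -> v <> (0, 0) ->
  s * cross u v = vnorm u * vnorm v * sin (s * arg v - s * arg u).
Proof.
  intros Hs Hu Hv. rewrite cross_polar by assumption.
  destruct Hs as [-> | ->].
  - rewrite !Rmult_1_l. reflexivity.
  - replace (-1 * arg v - -1 * arg u) with (- (arg v - arg u)) by ring. rewrite sin_neg. ring.
Qed.

Definition upper_half (u : point) : Prop := 0 < snd u \/ (snd u = 0 /\ 0 < fst u).

Lemma upper_half_iff_arg_lt_PI u : u <> (0, 0) -> upper_half u <-> arg u < PI.
Proof.
  intro Hu. destruct (arg_spec u Hu) as [[Ha1 Ha2] [Hx Hy]]. pose proof (vnorm_pos u Hu).
  pose proof PI_RGT_0. unfold upper_half. split.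
  - intros Hup. destruct (Rlt_dec (arg u) PI) as [| Hge]; auto. exfalso.
    destruct (Req_dec (arg u) PI) as [E | E].
    + rewrite E, sin_PI in Hy. rewrite E, cos_PI in Hx. nra.
    + assert (sin (arg u) < 0) by (apply sin_lt_0; lra). nra.
  - intro Hlt. destruct (Req_dec (arg u) 0) as [E | E].
    + right. rewrite E, sin_0 in Hy. rewrite E, cos_0 in Hx. lra.
    + left. assert (0 < sin (arg u)) by (apply sin_gt_0; lra). nra.
Qed.

Lemma arg_lt_of_cross_pos u v : u <> (0, 0) -> v <> (0, 0) -> 0 < cross u v ->
  upper_half u \/ ~ upper_half v -> arg u < arg v.
Proof.
  intros Hu Hv Hc Hh.
  rewrite (upper_half_iff_arg_lt_PI u Hu), (upper_half_iff_arg_lt_PI v Hv) in Hh.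
  destruct (arg_spec u Hu) as [[Ha1 Ha2] _], (arg_spec v Hv) as [[Hb1 Hb2] _].
  rewrite cross_polar in Hc by auto.
  pose proof (vnorm_pos u Hu). pose proof (vnorm_pos v Hv).
  assert (Hs : 0 < sin (arg v - arg u)).
  { destruct (Rlt_dec 0 (sin (arg v - arg u))); auto.
    assert (0 < vnorm u * vnorm v) by nra. nra. }
  destruct (Rlt_dec (arg u) (arg v)) as [| Hn]; auto. exfalso.
  destruct (Req_dec (arg u) (arg v)) as [E | E].
  - rewrite E, Rminus_diag, sin_0 in Hs. lra.
  - assert (sin (arg v - arg u) < 0) by (apply sin_lt_0_var; lra). lra.
Qed.

(** * Cyclic indices and finite sums *)

Lemma mod_add_cong n a b c :
  (a mod n = b mod n)%nat -> ((a + c) mod n = (b + c) mod n)%nat.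
Proof. intro H. rewrite (Nat.Div0.add_mod a), (Nat.Div0.add_mod b), H. reflexivity. Qed.

Lemma mod_succ_cong n a b : (a mod n = b mod n)%nat -> (S a mod n = S b mod n)%nat.
Proof. rewrite <- (Nat.add_1_r a), <- (Nat.add_1_r b). apply mod_add_cong. Qed.

Lemma mod_succ_inj n a b : (n <> 0)%nat -> (S a mod n = S b mod n)%nat -> (a mod n = b mod n)%nat.
Proof.
  intros Hn H. apply (mod_add_cong n _ _ (n - 1)) in H.
  replace (S a + (n - 1))%nat with (a + 1 * n)%nat in H by lia.
  replace (S b + (n - 1))%nat with (b + 1 * n)%nat in H by lia.
  now rewrite !Nat.Div0.mod_add in H.
Qed.

Lemma mod_add_neq n x m : (0 < m < n)%nat -> ((x + m) mod n <> x mod n)%nat.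
Proof.
  intros Hm E. assert (Hn : n <> 0%nat) by lia.
  pose proof (Nat.mod_upper_bound x n Hn).
  rewrite Nat.Div0.add_mod, (Nat.mod_small m) in E by lia.
  destruct (Nat.lt_ge_cases (x mod n + m) n).
  - rewrite Nat.mod_small in E; lia.
  - replace (x mod n + m)%nat with ((x mod n + m - n) + 1 * n)%nat in E by lia.
    rewrite Nat.Div0.mod_add, Nat.mod_small in E; lia.
Qed.

Lemma mod_offset n k i : (n <> 0)%nat -> exists p, (p < n)%nat /\ ((k + p) mod n = i mod n)%nat.
Proof.
  intro Hn. pose proof (Nat.mod_upper_bound k n Hn). pose proof (Nat.mod_upper_bound i n Hn).
  pose proof (Nat.div_mod_eq k n).
  destruct (Nat.le_gt_cases (k mod n) (i mod n)).
  - exists (i mod n - k mod n)%nat. split; [lia |].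
    replace (k + (i mod n - k mod n))%nat with (i mod n + (k / n) * n)%nat by lia.
    now rewrite Nat.Div0.mod_add, Nat.Div0.mod_mod.
  - exists (n + i mod n - k mod n)%nat. split; [lia |].
    replace (k + (n + i mod n - k mod n))%nat with (i mod n + (k / n + 1) * n)%nat by lia.
    now rewrite Nat.Div0.mod_add, Nat.Div0.mod_mod.
Qed.

Lemma vtx_cong n P i j : (i mod n = j mod n)%nat -> vtx n P i = vtx n P j.
Proof. unfold vtx. now intros ->. Qed.

Lemma vtx_small n P i : (i < n)%nat -> vtx n P i = P i.
Proof. intro. unfold vtx. now rewrite Nat.mod_small. Qed.

Lemma vtx_mod n P i : vtx n P (i mod n) = vtx n P i.
Proof. apply vtx_cong, Nat.Div0.mod_mod. Qed.

Lemma sumR_ext m f g : (forall i, (i < m)%nat -> f i = g i) -> sumR m f = sumR m g.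
Proof. induction m; simpl; intros H; [reflexivity |]. rewrite IHm, H; auto. Qed.

Lemma sumR_plus m f g : sumR m (fun i => f i + g i) = sumR m f + sumR m g.
Proof. induction m; simpl; [| rewrite IHm]; ring. Qed.

Lemma sumR_scale m c f : sumR m (fun i => c * f i) = c * sumR m f.
Proof. induction m; simpl; [| rewrite IHm]; ring. Qed.

Lemma sumR_nonneg m f : (forall i, (i < m)%nat -> 0 <= f i) -> 0 <= sumR m f.
Proof.
  induction m; simpl; intros H; [lra |].
  pose proof (H m (Nat.lt_succ_diag_r m)).
  pose proof (IHm (fun i Hi => H i (Nat.lt_lt_succ_r _ _ Hi))).
  lra.
Qed.

Lemma sumR_pos m f : (0 < m)%nat -> (forall i, (i < m)%nat -> 0 < f i) -> 0 < sumR m f.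
Proof.
  intros Hm H. destruct m as [| m]; [lia |]. simpl.
  pose proof (H m (Nat.lt_succ_diag_r m)).
  assert (0 <= sumR m f) by (apply sumR_nonneg; intros; left; apply H; lia). lra.
Qed.

Lemma sumR_neg m f : (0 < m)%nat -> (forall i, (i < m)%nat -> f i < 0) -> sumR m f < 0.
Proof.
  intros Hm H. assert (Hpos : 0 < sumR m (fun i => -1 * f i)).
  { apply sumR_pos; [exact Hm |]. intros i Hi. pose proof (H i Hi). lra. }
  rewrite sumR_scale in Hpos. lra.
Qed.

Lemma sumR_add m1 m2 f : sumR (m1 + m2) f = sumR m1 f + sumR m2 (fun i => f (m1 + i)%nat).
Proof.
  induction m2; simpl; [rewrite Nat.add_0_r | rewrite Nat.add_succ_r; simpl; rewrite IHm2]; ring.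
Qed.

Definition indicator (a i : nat) : R := if Nat.eqb i a then 1 else 0.

Lemma sumR_indicator m a h : (a < m)%nat -> sumR m (fun i => indicator a i * h i) = h a.
Proof.
  induction m; intros Ha; [lia |]. simpl. unfold indicator at 2.
  destruct (Nat.eqb_spec m a) as [-> | Hne].
  - rewrite (sumR_ext a _ (fun i => 0 * h i)), sumR_scale; [ring |].
    intros i Hi. unfold indicator. destruct (Nat.eqb_spec i a); [lia | reflexivity].
  - rewrite IHm by lia. ring.
Qed.

Lemma sumR_three_points m a b c wa wb wc h : (a < m)%nat -> (b < m)%nat -> (c < m)%nat ->
  sumR m (fun i => (wa * indicator a i + wb * indicator b i + wc * indicator c i) * h i)
  = wa * h a + wb * h b + wc * h c.
Proof.
  intros Ha Hb Hc.
  rewrite (sumR_ext m _ (fun i => wa * (indicator a i * h i) + wb * (indicator b i * h i)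
                                  + wc * (indicator c i * h i))) by (intros; ring).
  rewrite !sumR_plus, !sumR_scale, !sumR_indicator by assumption. reflexivity.
Qed.

(** * Plane geometry *)

Lemma vsub_neq0 A B : A <> B -> vsub A B <> (0, 0).
Proof.
  destruct A as [a1 a2], B as [b1 b2]. unfold vsub; simpl. intros H E.
  injection E as E1 E2. apply H. f_equal; lra.
Qed.

Lemma cross_of_collinear A B C : collinear A B C -> cross (vsub B A) (vsub C A) = 0.
Proof.
  intros [a [b [c [Hab [HA [HB HC]]]]]]. unfold cross, vsub; simpl.
  assert (LB : a * (fst B - fst A) + b * (snd B - snd A) = 0) by lra.
  assert (LC : a * (fst C - fst A) + b * (snd C - snd A) = 0) by lra.
  destruct Hab as [Ha | Hb].
  - apply (Rmult_eq_reg_l a); [| exact Ha].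
    transitivity ((snd C - snd A) * (a * (fst B - fst A) + b * (snd B - snd A))
                  - (snd B - snd A) * (a * (fst C - fst A) + b * (snd C - snd A))); [ring |].
    rewrite LB, LC. ring.
  - apply (Rmult_eq_reg_l b); [| exact Hb].
    transitivity ((fst B - fst A) * (a * (fst C - fst A) + b * (snd C - snd A))
                  - (fst C - fst A) * (a * (fst B - fst A) + b * (snd B - snd A))); [ring |].
    rewrite LB, LC. ring.
Qed.

Lemma collinear_of_normal (A B C : point) p q : (p <> 0 \/ q <> 0) ->
  p * (fst B - fst A) + q * (snd B - snd A) = 0 ->
  p * (fst C - fst A) + q * (snd C - snd A) = 0 -> collinear A B C.
Proof.
  intros Hpq HB HC. exists p, q, (p * fst A + q * snd A).
  split; [exact Hpq | repeat split; lra].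
Qed.

Lemma collinear_of_cross A B C : cross (vsub B A) (vsub C A) = 0 -> collinear A B C.
Proof.
  unfold cross, vsub; simpl. intro H.
  destruct (Req_dec (fst B) (fst A)), (Req_dec (snd B) (snd A));
    [| apply (collinear_of_normal A B C (snd A - snd B) (fst B - fst A)); lra ..].
  destruct (Req_dec (fst C) (fst A)), (Req_dec (snd C) (snd A));
    [apply (collinear_of_normal A B C 1 0); lra
    | apply (collinear_of_normal A B C (snd A - snd C) (fst C - fst A)); lra ..].
Qed.

Lemma between_of_collinear (A B C : point) : A <> B -> B <> C -> A <> C ->
  cross (vsub B A) (vsub C A) = 0 ->
  dot (vsub B A) (vsub C A) < 0 \/ dot (vsub A B) (vsub C B) < 0 \/ dot (vsub A C) (vsub B C) < 0.
Proof.
  intros HAB HBC HAC Hc.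
  pose proof (sqnorm_pos _ (vsub_neq0 _ _ (not_eq_sym HAB))) as Hu.
  pose proof (sqnorm_pos _ (vsub_neq0 _ _ (not_eq_sym HAC))) as Hv.
  pose proof (sqnorm_pos _ (vsub_neq0 _ _ HBC)) as Huv.
  destruct A as [a1 a2], B as [b1 b2], C as [c1 c2].
  unfold cross, dot, vsub in *; simpl in *.
  set (u1 := b1 - a1) in *. set (u2 := b2 - a2) in *.
  set (v1 := c1 - a1) in *. set (v2 := c2 - a2) in *.
  set (d := u1 * v1 + u2 * v2).
  assert (Hlag : d * d = (u1 ^ 2 + u2 ^ 2) * (v1 ^ 2 + v2 ^ 2)).
  { replace (d * d) with ((u1 ^ 2 + u2 ^ 2) * (v1 ^ 2 + v2 ^ 2) - (u1 * v2 - u2 * v1) ^ 2)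
      by (unfold d; ring).
    rewrite Hc. ring. }
  destruct (Rlt_or_le d 0) as [Hd | Hd]; [left; exact Hd | right].
  assert (Hd0 : 0 < d) by (destruct Hd as [| <-]; [assumption | nra]).
  assert (Hprod : ((a1 - b1) * (c1 - b1) + (a2 - b2) * (c2 - b2))
                  * ((a1 - c1) * (b1 - c1) + (a2 - c2) * (b2 - c2))
                  = - d * ((b1 - c1) ^ 2 + (b2 - c2) ^ 2)).
  { transitivity ((u1 ^ 2 + u2 ^ 2 - d) * (v1 ^ 2 + v2 ^ 2 - d));
      [unfold d, u1, u2, v1, v2; ring |].
    transitivity ((u1 ^ 2 + u2 ^ 2) * (v1 ^ 2 + v2 ^ 2) - d * (u1 ^ 2 + u2 ^ 2 + v1 ^ 2 + v2 ^ 2)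
                  + d * d); [ring |].
    rewrite <- Hlag. unfold d, u1, u2, v1, v2; ring. }
  destruct (Rlt_or_le ((a1 - b1) * (c1 - b1) + (a2 - b2) * (c2 - b2)) 0); [left; assumption |].
  right. nra.
Qed.

Lemma cross_mul_nonpos_of_opposite u x y :
  cross x y = 0 -> dot x y < 0 -> cross u x * cross u y <= 0.
Proof.
  intros Hc Hd.
  assert (Hy : 0 < fst y ^ 2 + snd y ^ 2).
  { apply sqnorm_pos. intro E. rewrite E in Hd. unfold dot in Hd; simpl in Hd. lra. }
  assert (Hid : (fst y ^ 2 + snd y ^ 2) * cross u x = dot x y * cross u y - cross x y * dot u y)
    by (unfold cross, dot; ring).
  rewrite Hc, Rmult_0_l, Rminus_0_r in Hid.
  assert (H : (fst y ^ 2 + snd y ^ 2) * (cross u x * cross u y) <= 0).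
  { rewrite <- Rmult_assoc, Hid. pose proof (Rle_0_sqr (cross u y)). unfold Rsqr in *. nra. }
  nra.
Qed.

Lemma point_on_line (A X u : point) : u <> (0, 0) -> cross u (vsub X A) = 0 ->
  exists t, fst X = fst A + t * fst u /\ snd X = snd A + t * snd u.
Proof.
  intros Hu Hc. pose proof (sqnorm_pos u Hu) as Hq.
  set (t := dot (vsub X A) u / (fst u ^ 2 + snd u ^ 2)). exists t.
  assert (Hx : fst X - fst A - t * fst u = - snd u * cross u (vsub X A) / (fst u ^ 2 + snd u ^ 2))
    by (unfold t, cross, dot, vsub; simpl; field; lra).
  assert (Hy : snd X - snd A - t * snd u = fst u * cross u (vsub X A) / (fst u ^ 2 + snd u ^ 2))
    by (unfold t, cross, dot, vsub; simpl; field; lra).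
  rewrite Hc, Rmult_0_r, Rdiv_0_l in Hx, Hy. split; lra.
Qed.

(** * Convex hulls and neighbourhoods *)

Lemma hull_three_points n P a b c wa wb wc X : (n <> 0)%nat ->
  0 <= wa -> 0 <= wb -> 0 <= wc -> wa + wb + wc = 1 ->
  fst X = wa * fst (vtx n P a) + wb * fst (vtx n P b) + wc * fst (vtx n P c) ->
  snd X = wa * snd (vtx n P a) + wb * snd (vtx n P b) + wc * snd (vtx n P c) ->
  conv_hull n P X.
Proof.
  intros Hn Ha Hb Hc Hsum Hx Hy. unfold vtx in Hx, Hy.
  pose proof (Nat.mod_upper_bound a n Hn). pose proof (Nat.mod_upper_bound b n Hn).
  pose proof (Nat.mod_upper_bound c n Hn).
  exists (fun i => wa * indicator (a mod n) i + wb * indicator (b mod n) i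
                   + wc * indicator (c mod n) i).
  split; [| split; [| split]].
  - intros i _. unfold indicator.
    destruct (Nat.eqb i (a mod n)), (Nat.eqb i (b mod n)), (Nat.eqb i (c mod n)); lra.
  - rewrite (sumR_ext n _ (fun i => (wa * indicator (a mod n) i + wb * indicator (b mod n) i
                                     + wc * indicator (c mod n) i) * 1)) by (intros; ring).
    rewrite sumR_three_points by assumption. lra.
  - rewrite sumR_three_points by assumption. exact Hx.
  - rewrite sumR_three_points by assumption. exact Hy.
Qed.

Lemma hull_segment n P a b X : (n <> 0)%nat ->
  segment (vtx n P a) (vtx n P b) X -> conv_hull n P X.
Proof.
  intros Hn [t [Ht [Hx Hy]]].
  apply (hull_three_points n P a b a (1 - t) t 0 X Hn); try lra.
Qed.

Lemma nonneg_div_of_mul D x : D <> 0 -> 0 <= D * x -> 0 <= x / D.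
Proof.
  intros HD H. replace (x / D) with ((D * x) / (D * D)) by (field; exact HD).
  apply Rmult_le_pos; [exact H |]. left. apply Rinv_0_lt_compat.
  destruct (Rlt_or_le 0 D); nra.
Qed.

(* The three products are [D] times the barycentric coordinates of [X]. *)
Lemma hull_triangle n P a b c X : (n <> 0)%nat ->
  let A := vtx n P a in let B := vtx n P b in let C := vtx n P c in
  let D := cross (vsub B A) (vsub C A) in D <> 0 ->
  0 <= D * cross (vsub B X) (vsub C X) ->
  0 <= D * cross (vsub C X) (vsub A X) ->
  0 <= D * cross (vsub A X) (vsub B X) -> conv_hull n P X.
Proof.
  intros Hn A B C D HD H1 H2 H3.
  apply (hull_three_points n P a b c (cross (vsub B X) (vsub C X) / D)
           (cross (vsub C X) (vsub A X) / D) (cross (vsub A X) (vsub B X) / D) X Hn);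
    try (apply nonneg_div_of_mul; assumption);
    fold A B C; unfold D in *; unfold cross, vsub in *; simpl in *; field; exact HD.
Qed.

Lemma hull_affine_nonneg n P X al be ga : conv_hull n P X ->
  (forall i, (i < n)%nat -> 0 <= al * fst (P i) + be * snd (P i) + ga) ->
  0 <= al * fst X + be * snd X + ga.
Proof.
  intros [lam [Hl [Hs [Hx Hy]]]] Hv.
  replace (al * fst X + be * snd X + ga)
    with (sumR n (fun i => lam i * (al * fst (P i) + be * snd (P i) + ga))).
  - apply sumR_nonneg. intros i Hi. apply Rmult_le_pos; auto.
  - rewrite (sumR_ext n _ (fun i => al * (lam i * fst (P i)) + be * (lam i * snd (P i))
                                    + ga * lam i)) by (intros; ring).
    rewrite !sumR_plus, !sumR_scale, Hs, Hx, Hy. ring.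
Qed.

Lemma dist2_coord (X Y : point) eps : 0 < eps -> dist2 X Y < eps ^ 2 ->
  Rabs (fst X - fst Y) < eps /\ Rabs (snd X - snd Y) < eps.
Proof.
  intros He H. unfold dist2 in H.
  set (x := fst X - fst Y) in *. set (y := snd X - snd Y) in *.
  pose proof (pow2_ge_0 x). pose proof (pow2_ge_0 y).
  split; apply Rabs_def1; nra.
Qed.

Lemma cross_small_near (K c : R) : 0 < c -> exists eps, 0 < eps /\
  forall U M Y, Rabs (fst U) + Rabs (snd U) <= K -> dist2 M Y < eps ^ 2 ->
    Rabs (cross U (vsub M Y)) < c.
Proof.
  intro Hc. set (K' := Rabs K + 1).
  assert (HK' : 0 < K') by (unfold K'; pose proof (Rabs_pos K); lra).
  exists (c / K'). split; [apply Rdiv_lt_0_compat; assumption |].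
  intros U M Y HU HY. assert (Heps : K' * (c / K') = c) by (field; lra).
  set (eps := c / K') in *. assert (0 < eps) by (apply Rdiv_lt_0_compat; assumption).
  destruct (dist2_coord M Y eps ltac:(assumption) HY) as [H1 H2].
  pose proof (Rabs_pos (fst U)). pose proof (Rabs_pos (snd U)). pose proof (Rle_abs K).
  unfold cross, vsub; simpl.
  eapply Rle_lt_trans; [apply Rabs_triang |]. rewrite Rabs_Ropp, !Rabs_mult.
  assert (Rabs (fst U) * Rabs (snd M - snd Y) <= Rabs (fst U) * eps)
    by (apply Rmult_le_compat_l; lra).
  assert (Rabs (snd U) * Rabs (fst M - fst Y) <= Rabs (snd U) * eps)
    by (apply Rmult_le_compat_l; lra).
  unfold K' in Heps. nra.
Qed.

Lemma finite_upper_bound (f : nat -> R) m : exists K, forall i, (i < m)%nat -> f i <= K.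
Proof.
  induction m as [| m [K HK]]; [exists 0; intros; lia |].
  exists (Rmax K (f m)). intros i Hi. destruct (Nat.eq_dec i m) as [-> | Hne].
  - apply Rmax_r.
  - eapply Rle_trans; [apply HK; lia | apply Rmax_l].
Qed.

Lemma finite_pos_lower_bound (f : nat -> R) m : (forall i, (i < m)%nat -> 0 < f i) ->
  exists c, 0 < c /\ forall i, (i < m)%nat -> c <= f i.
Proof.
  intro Hpos. destruct (finite_upper_bound (fun i => / f i) m) as [K HK].
  exists (/ (Rabs K + 1)). pose proof (Rabs_pos K). pose proof (Rle_abs K).
  split; [apply Rinv_0_lt_compat; lra |].
  intros i Hi. pose proof (Hpos i Hi). pose proof (HK i Hi).
  rewrite <- (Rinv_inv (f i)). apply Rinv_le_contravar; [apply Rinv_0_lt_compat |]; lra.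
Qed.

(* Near the midpoint of [A B], [Y] lies in the triangle [A B C] or [A B D] according to
   its side of the line [A B]. *)
Lemma hull_near_midpoint n P a b c d : (n <> 0)%nat ->
  let A := vtx n P a in let B := vtx n P b in let C := vtx n P c in let D := vtx n P d in
  0 < cross (vsub B A) (vsub C A) -> cross (vsub B A) (vsub D A) < 0 ->
  exists eps, 0 < eps /\ forall Y,
    dist2 ((fst A + fst B) / 2, (snd A + snd B) / 2) Y < eps ^ 2 -> conv_hull n P Y.
Proof.
  intros Hn A B C D HC HD.
  set (M := ((fst A + fst B) / 2, (snd A + snd B) / 2)).
  set (size := fun U : point => Rabs (fst U) + Rabs (snd U)).
  set (K := size (vsub B C) + size (vsub C A) + size (vsub B D) + size (vsub D A)).
  set (c0 := Rmin (cross (vsub B A) (vsub C A)) (- cross (vsub B A) (vsub D A)) / 2).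
  assert (Hc0 : 0 < c0) by (apply Rdiv_lt_0_compat; [apply Rmin_glb_lt |]; lra).
  pose proof (Rmin_l (cross (vsub B A) (vsub C A)) (- cross (vsub B A) (vsub D A))).
  pose proof (Rmin_r (cross (vsub B A) (vsub C A)) (- cross (vsub B A) (vsub D A))).
  destruct (cross_small_near K c0 Hc0) as [eps [Heps Hnear]].
  exists eps. split; [exact Heps |]. intros Y HY.
  assert (Hsmall : forall U, U = vsub B C \/ U = vsub C A \/ U = vsub B D \/ U = vsub D A ->
                   cross U (vsub M Y) < c0 /\ - c0 < cross U (vsub M Y)).
  { intros U HU. apply Rabs_def2, (Hnear U M Y); [| exact HY].
    assert (Hsize : forall V, 0 <= size V)
      by (intro V; unfold size; pose proof (Rabs_pos (fst V)); pose proof (Rabs_pos (snd V)); lra).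
    pose proof (Hsize (vsub B C)). pose proof (Hsize (vsub C A)).
    pose proof (Hsize (vsub B D)). pose proof (Hsize (vsub D A)).
    fold (size U). unfold K. destruct HU as [-> | [-> | [-> | ->]]]; lra. }
  pose proof (Hsmall _ (or_introl eq_refl)).
  pose proof (Hsmall _ (or_intror (or_introl eq_refl))).
  pose proof (Hsmall _ (or_intror (or_intror (or_introl eq_refl)))).
  pose proof (Hsmall _ (or_intror (or_intror (or_intror eq_refl)))).
  assert (Hmid : forall Z,
    cross (vsub B Y) (vsub Z Y) = cross (vsub B A) (vsub Z A) / 2 + cross (vsub B Z) (vsub M Y) /\
    cross (vsub Z Y) (vsub A Y) = cross (vsub B A) (vsub Z A) / 2 + cross (vsub Z A) (vsub M Y))
    by (intro Z; unfold M, cross, vsub; simpl; split; field).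
  destruct (Hmid C) as [HC1 HC2], (Hmid D) as [HD1 HD2]. unfold c0 in *.
  destruct (Rle_or_lt 0 (cross (vsub A Y) (vsub B Y))).
  - apply (hull_triangle n P a b c Y Hn); cbv zeta; fold A B C;
      [lra | rewrite HC1 | rewrite HC2 |]; nra.
  - apply (hull_triangle n P a b d Y Hn); cbv zeta; fold A B D;
      [lra | rewrite HD1 | rewrite HD2 |]; nra.
Qed.

Lemma discrete_sign_change (f : nat -> R) a b : (a < b)%nat -> 0 <= f a -> f b <= 0 ->
  exists k, (a <= k < b)%nat /\ 0 <= f k /\ f (S k) <= 0.
Proof.
  induction b as [| b IHb]; intros Hab Ha Hb; [lia |].
  destruct (Nat.eq_dec a b) as [<- | Hne]; [exists a; split; [lia | auto] |].
  destruct (Rle_dec 0 (f b)) as [Hfb | Hfb]; [exists b; split; [lia | auto] |].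
  destruct IHb as [k [Hk Hfk]]; [lia | assumption | lra |]. exists k. split; [lia | exact Hfk].
Qed.

(** * Winding of angles *)

(* In orientation [s], the turn from [u] to [v] crosses the direction of argument 0. *)
Definition wraps (s : R) (u v : point) : Prop :=
  (s = 1 /\ ~ upper_half u /\ upper_half v) \/ (s = -1 /\ upper_half u /\ ~ upper_half v).

Lemma arg_step_or_wraps s u v : s = 1 \/ s = -1 -> u <> (0, 0) -> v <> (0, 0) ->
  0 < s * cross u v -> s * arg u < s * arg v \/ wraps s u v.
Proof.
  intros Hs Hu Hv Hc. unfold wraps. destruct Hs as [-> | ->].
  - rewrite !Rmult_1_l in *.
    destruct (classic (upper_half u)); [left; apply arg_lt_of_cross_pos; tauto |].
    destruct (classic (upper_half v)); [right; left; tauto |].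
    left. apply arg_lt_of_cross_pos; tauto.
  - assert (Hc' : 0 < cross v u) by (rewrite cross_anticomm; lra).
    enough (arg v < arg u \/ upper_half u /\ ~ upper_half v)
      by (destruct H; [left; lra | right; tauto]).
    destruct (classic (upper_half v)); [left; apply arg_lt_of_cross_pos; tauto |].
    destruct (classic (upper_half u)); [right; tauto |].
    left. apply arg_lt_of_cross_pos; tauto.
Qed.

Lemma wraps_above s u v w : wraps s u v ->
  0 < s * cross u v -> 0 < s * cross u w -> 0 < s * cross v w -> 0 < s * snd w.
Proof.
  intros Hw H1 H2 H3.
  destruct u as [u1 u2], v as [v1 v2], w as [w1 w2].
  unfold wraps, upper_half, cross in *; simpl in *.
  destruct Hw as [[-> [Hu Hv]] | [-> [Hu Hv]]].
  - assert (u2 <= 0) by (apply Rnot_lt_le; intro; apply Hu; left; lra).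
    destruct Hv as [Hv | [Hv1 Hv2]]; [nra |].
    destruct (Req_dec u2 0); [| nra].
    assert (u1 <= 0) by (apply Rnot_lt_le; intro; apply Hu; right; split; lra). subst. nra.
  - assert (v2 <= 0) by (apply Rnot_lt_le; intro; apply Hv; left; lra).
    destruct Hu as [Hu | [Hu1 Hu2]]; [nra |].
    destruct (Req_dec v2 0); [| nra].
    assert (v1 <= 0) by (apply Rnot_lt_le; intro; apply Hv; right; split; lra). subst. nra.
Qed.

Lemma exists_not_increasing (f : nat -> R) n : (0 < n)%nat -> f n = f 0%nat ->
  exists d, (d < n)%nat /\ ~ f d < f (S d).
Proof.
  intros Hn Hper. apply NNPP. intro Hno.
  assert (Hinc : forall m, (1 <= m <= n)%nat -> f 0%nat < f m).
  { induction m as [| m IHm]; intros Hm; [lia |].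
    assert (Hstep : f m < f (S m))
      by (apply NNPP; intro; apply Hno; exists m; split; [lia | assumption]).
    destruct (Nat.eq_dec m 0) as [-> | Hm0]; [exact Hstep |].
    pose proof (IHm ltac:(lia)). lra. }
  pose proof (Hinc n ltac:(lia)). lra.
Qed.

Lemma increasing_of_step (f : nat -> R) N m1 m2 : (forall m, (m < N)%nat -> f m < f (S m)) ->
  (m1 < m2 <= N)%nat -> f m1 < f m2.
Proof.
  intros Hstep Hm. induction m2 as [| m2 IH]; [lia |].
  destruct (Nat.eq_dec m1 m2) as [-> | Hne]; [apply Hstep; lia |].
  pose proof (IH ltac:(lia)). pose proof (Hstep m2 ltac:(lia)). lra.
Qed.

(* Lifting the angles [A (p + m)], [m <= N], by [2 PI] once the index passes [N] makes
   them increase from [A p] to [A p + 2 PI]. *)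
Lemma angles_lift (A : nat -> R) N p : (forall q, A (q + N)%nat = A q) ->
  (forall q, (S q < N)%nat -> A q < A (S q)) -> A (N - 1)%nat < A 0%nat + 2 * PI ->
  (p < N)%nat -> exists theta : nat -> R,
    theta 0%nat = A p /\ theta N = A p + 2 * PI /\
    (forall m, (m < N)%nat -> theta m < theta (S m)) /\
    (forall m, sin (theta m - A p) = sin (A (p + m)%nat - A p)).
Proof.
  intros Hper Hinc Hwrap Hp.
  exists (fun m => if Nat.ltb (p + m) N then A (p + m)%nat else A (p + m - N)%nat + 2 * PI).
  assert (Hshift : forall q, (N <= q)%nat -> A q = A (q - N)%nat)
    by (intros q Hq; rewrite <- (Hper (q - N)%nat); f_equal; lia).
  split; [| split; [| split]].
  - rewrite Nat.add_0_r. destruct (Nat.ltb_spec p N); [reflexivity | lia].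
  - destruct (Nat.ltb_spec (p + N) N); [lia |]. now replace (p + N - N)%nat with p by lia.
  - intros m Hm. destruct (Nat.ltb_spec (p + m) N), (Nat.ltb_spec (p + S m) N).
    + rewrite Nat.add_succ_r. apply Hinc. lia.
    + replace (p + m)%nat with (N - 1)%nat by lia. replace (p + S m - N)%nat with 0%nat by lia. lra.
    + lia.
    + replace (p + S m - N)%nat with (S (p + m - N)) by lia. apply Rplus_lt_compat_r, Hinc. lia.
  - intro m. destruct (Nat.ltb_spec (p + m) N); [reflexivity |].
    rewrite (Hshift (p + m)%nat) by lia.
    replace (A (p + m - N)%nat + 2 * PI - A p) with ((A (p + m - N)%nat - A p) + 2 * PI) by ring.
    rewrite sin_plus, sin_2PI, cos_2PI. ring.
Qed.

Lemma sin_neg_of_nonpos a b : 0 < a -> a < b -> b < 2 * PI -> sin a <= 0 -> sin b < 0.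
Proof.
  intros H1 H2 H3 H4. pose proof PI_RGT_0.
  destruct (Rlt_or_le a PI).
  - assert (0 < sin a) by (apply sin_gt_0; lra). lra.
  - apply sin_lt_0; lra.
Qed.

Lemma sin_sign_changes_once (A : nat -> R) N p m1 m2 : (forall q, A (q + N)%nat = A q) ->
  (forall q, (S q < N)%nat -> A q < A (S q)) -> A (N - 1)%nat < A 0%nat + 2 * PI ->
  (p < N)%nat -> (1 <= m1)%nat -> (m1 < m2 < N)%nat ->
  sin (A (p + m1)%nat - A p) <= 0 -> sin (A (p + m2)%nat - A p) < 0.
Proof.
  intros Hper Hinc Hwrap Hp Hm1 Hm2 Hsin.
  destruct (angles_lift A N p Hper Hinc Hwrap Hp) as [theta [H0 [HN [Hstep Hs]]]].
  rewrite <- Hs in Hsin |- *.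
  pose proof (increasing_of_step theta N 0 m1 Hstep ltac:(lia)).
  pose proof (increasing_of_step theta N m1 m2 Hstep ltac:(lia)).
  pose proof (increasing_of_step theta N m2 N Hstep ltac:(lia)).
  apply (sin_neg_of_nonpos (theta m1 - A p)); lra.
Qed.

Lemma partial_sums_pos (t : nat -> R) N d : t 0%nat = 0 -> sumR N t = 0 ->
  (forall m1 m2, (1 <= m1)%nat -> (m1 < m2 < N)%nat -> t m1 <= 0 -> t m2 < 0) ->
  (2 <= d < N)%nat -> 0 < sumR d t.
Proof.
  intros Ht0 Hsum Hsign Hd.
  destruct (classic (exists m, (1 <= m < d)%nat /\ t m <= 0)) as [[m1 [Hm1 Ht1]] | Hno].
  - assert (Hneg : sumR (N - d) (fun i => t (d + i)%nat) < 0).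
    { apply sumR_neg; [lia |]. intros i Hi. apply (Hsign m1); [lia | lia | exact Ht1]. }
    replace N with (d + (N - d))%nat in Hsum by lia. rewrite sumR_add in Hsum. lra.
  - replace d with (1 + (d - 1))%nat by lia.
    rewrite sumR_add. change (sumR 1 t) with (0 + t 0%nat). rewrite Ht0.
    assert (0 < sumR (d - 1) (fun i => t (1 + i)%nat)); [| lra].
    apply sumR_pos; [lia |]. intros i Hi. apply Rnot_le_lt. intro Hle.
    apply Hno. exists (1 + i)%nat. split; [lia | exact Hle].
Qed.

(** * Polygons in convex position *)

Definition edge n P i : point := vsub (vtx n P (S i)) (vtx n P i).

Definition edge_side n P (s : R) i X : R := s * cross (edge n P i) (vsub X (vtx n P i)).

Definition convex_position n P (s : R) : Prop :=
  (s = 1 \/ s = -1) /\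
  forall i j, (j mod n <> i mod n)%nat -> (j mod n <> S i mod n)%nat ->
    0 < edge_side n P s i (vtx n P j).

Section Polygon.

Variables (n : nat) (P : nat -> point).
Hypothesis n_ge3 : (3 <= n)%nat.

Local Notation V := (vtx n P).
Local Notation e := (edge n P).

Lemma n_neq0 : n <> 0%nat.
Proof. lia. Qed.

Lemma mod_succ_neq i : (S i mod n <> i mod n)%nat.
Proof. rewrite <- Nat.add_1_r. apply mod_add_neq. lia. Qed.

Lemma mod_succ2_neq i : (S (S i) mod n <> i mod n)%nat.
Proof. replace (S (S i)) with (i + 2)%nat by lia. apply mod_add_neq. lia. Qed.

Lemma edge_cong i j : (i mod n = j mod n)%nat -> e i = e j.
Proof.
  intro H. unfold edge.
  rewrite (vtx_cong n P i j), (vtx_cong n P (S i) (S j)); auto using mod_succ_cong.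
Qed.

Lemma mod_pred_succ i : (S (i + n - 1) mod n = i mod n)%nat.
Proof.
  replace (S (i + n - 1)) with (i + 1 * n)%nat by lia. apply Nat.Div0.mod_add.
Qed.

Lemma argP_edge i : argP n P i = arg (e i).
Proof. reflexivity. Qed.

Lemma argP_cong i j : (i mod n = j mod n)%nat -> argP n P i = argP n P j.
Proof. intro H. rewrite !argP_edge. now rewrite (edge_cong i j H). Qed.

Section Orientation.

Variable s : R.
Hypothesis convex_s : convex_position n P s.

Local Notation side := (edge_side n P s).

Lemma orientation_sign : s = 1 \/ s = -1.
Proof. exact (proj1 convex_s). Qed.

Lemma side_vtx_pos i j : (j mod n <> i mod n)%nat -> (j mod n <> S i mod n)%nat -> 0 < side i (V j).
Proof. exact (proj2 convex_s i j). Qed.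

Lemma side_succ2_pos i : 0 < side i (V (S (S i))).
Proof. apply side_vtx_pos; [apply mod_succ2_neq | apply mod_succ_neq]. Qed.

Lemma edge_neq0 i : e i <> (0, 0).
Proof.
  intro E. pose proof (side_succ2_pos i) as H. unfold edge_side in H. rewrite E in H.
  unfold cross in H; simpl in H. lra.
Qed.

Lemma turn_pos i : 0 < s * cross (e i) (e (S i)).
Proof.
  pose proof (side_succ2_pos i) as H. unfold edge_side in H.
  replace (cross (e i) (e (S i))) with (cross (e i) (vsub (V (S (S i))) (V i))); [exact H |].
  unfold edge, cross, vsub; simpl. ring.
Qed.

Lemma vtx_neq i j : (i mod n <> j mod n)%nat -> V i <> V j.
Proof.
  intros Hij Heq.
  assert (Hzero : forall a b, (b mod n <> a mod n)%nat -> (b mod n <> S a mod n)%nat ->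
                              V a = V b -> False).
  { intros a b Hb1 Hb2 Hab. pose proof (side_vtx_pos a b Hb1 Hb2) as H.
    unfold edge_side in H. rewrite Hab in H. unfold cross, vsub in H; simpl in H. lra. }
  destruct (Nat.eq_dec (j mod n) (S i mod n)) as [Hj | Hj].
  - apply (Hzero j i); [exact Hij | | exact (eq_sym Heq)].
    rewrite (mod_succ_cong n j (S i) Hj). intro h. exact (mod_succ2_neq i (eq_sym h)).
  - exact (Hzero i j (not_eq_sym Hij) Hj Heq).
Qed.

Lemma not_between m x y : (x mod n <> m mod n)%nat -> (y mod n <> m mod n)%nat ->
  (x mod n <> y mod n)%nat ->
  cross (vsub (V x) (V m)) (vsub (V y) (V m)) = 0 ->
  dot (vsub (V x) (V m)) (vsub (V y) (V m)) < 0 -> False.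
Proof.
  intros Hxm Hym Hxy Hc Hd.
  assert (Hsucc : forall a b, (b mod n <> m mod n)%nat -> (a mod n <> b mod n)%nat ->
                    (a mod n = S m mod n)%nat ->
                    cross (vsub (V a) (V m)) (vsub (V b) (V m)) = 0 -> False).
  { intros a b Hbm Hab Ha Hab0. assert (Hb : (b mod n <> S m mod n)%nat) by congruence.
    pose proof (side_vtx_pos m b Hbm Hb) as H. unfold edge_side, edge in H.
    rewrite <- (vtx_cong n P a (S m) Ha), Hab0, Rmult_0_r in H. lra. }
  destruct (Nat.eq_dec (x mod n) (S m mod n)) as [Hx | Hx]; [exact (Hsucc x y Hym Hxy Hx Hc) |].
  destruct (Nat.eq_dec (y mod n) (S m mod n)) as [Hy | Hy].
  { apply (Hsucc y x Hxm (not_eq_sym Hxy) Hy). rewrite cross_anticomm, Hc. ring. }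
  pose proof (side_vtx_pos m x Hxm Hx) as Px. pose proof (side_vtx_pos m y Hym Hy) as Py.
  pose proof (cross_mul_nonpos_of_opposite (e m) _ _ Hc Hd).
  unfold edge_side in Px, Py. destruct orientation_sign as [-> | ->]; nra.
Qed.

Lemma strict_of_convex_position : is_strict n P.
Proof.
  intros i j k Hi Hj Hk Hij Hjk Hik Hcol.
  rewrite <- (vtx_small n P i), <- (vtx_small n P j), <- (vtx_small n P k) in Hcol by assumption.
  assert (Hneq : forall a b, (a < n)%nat -> (b < n)%nat -> a <> b -> (a mod n <> b mod n)%nat)
    by (intros; rewrite !Nat.mod_small; assumption).
  pose proof (Hneq i j Hi Hj Hij). pose proof (Hneq j k Hj Hk Hjk). pose proof (Hneq i k Hi Hk Hik).
  pose proof (cross_of_collinear _ _ _ Hcol) as Hc.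
  destruct (between_of_collinear (V i) (V j) (V k)) as [Hb | [Hb | Hb]];
    try (apply vtx_neq; assumption); [exact Hc | ..].
  - apply (not_between i j k); auto.
  - apply (not_between j i k); auto. unfold cross, vsub in *; simpl in *; lra.
  - apply (not_between k i j); auto. unfold cross, vsub in *; simpl in *; lra.
Qed.

Lemma side_vtx_nonneg i j : 0 <= side i (V j).
Proof.
  destruct (Nat.eq_dec (j mod n) (i mod n)) as [Hi | Hi].
  { rewrite (vtx_cong n P j i Hi). unfold edge_side, cross, vsub. simpl. lra. }
  destruct (Nat.eq_dec (j mod n) (S i mod n)) as [Hs | Hs].
  { rewrite (vtx_cong n P j (S i) Hs). unfold edge_side, edge, cross, vsub. simpl. lra. }
  left. exact (side_vtx_pos i j Hi Hs).
Qed.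

Lemma side_shift i X Y : side i Y = side i X - s * cross (e i) (vsub X Y).
Proof. unfold edge_side, cross, vsub. simpl. ring. Qed.

Lemma side_nonneg_of_hull i X : conv_hull n P X -> 0 <= side i X.
Proof.
  intro HX.
  assert (Haff : forall Z, side i Z = (- s * snd (e i)) * fst Z + (s * fst (e i)) * snd Z
                                      + s * (snd (e i) * fst (V i) - fst (e i) * snd (V i)))
    by (intro; unfold edge_side, cross, vsub; simpl; ring).
  rewrite Haff. apply (hull_affine_nonneg n P X); [exact HX |].
  intros j Hj. rewrite <- Haff, <- (vtx_small n P j Hj). apply side_vtx_nonneg.
Qed.

Lemma oriented_mul_nonneg D a : 0 < s * D -> 0 <= s * a -> 0 <= D * a.
Proof. destruct orientation_sign as [-> | ->]; nra. Qed.

(* Fan triangulation from [V 0]: the triangle [V 0, V k, V (k+1)] containing [X] is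
   found where [k |-> s * cross (V k - V 0) (X - V 0)] changes sign. *)
Lemma hull_of_side_nonneg X : (forall i, (i < n)%nat -> 0 <= side i X) -> conv_hull n P X.
Proof.
  intros Hin. set (f := fun k => s * cross (vsub (V k) (V 0)) (vsub X (V 0))).
  assert (Hf1 : 0 <= f 1%nat) by exact (Hin 0%nat ltac:(lia)).
  assert (Hfn : f (n - 1)%nat <= 0).
  { pose proof (Hin (n - 1)%nat ltac:(lia)) as H. unfold edge_side, edge in H.
    rewrite (vtx_cong n P (S (n - 1)) 0 (mod_pred_succ 0)) in H.
    replace (f (n - 1)%nat) with (- (s * cross (vsub (V 0) (V (n - 1))) (vsub X (V (n - 1)))));
      [lra | unfold f, cross, vsub; simpl; ring]. }
  destruct (discrete_sign_change f 1 (n - 1) ltac:(lia) Hf1 Hfn) as [k [Hk [Hfk HfSk]]].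
  assert (HD : 0 < s * cross (vsub (V k) (V 0)) (vsub (V (S k)) (V 0))).
  { replace (cross (vsub (V k) (V 0)) (vsub (V (S k)) (V 0))) with (cross (e k) (vsub (V 0) (V k)))
      by (unfold edge, cross, vsub; simpl; ring).
    apply side_vtx_pos; rewrite !Nat.mod_small; lia. }
  apply (hull_triangle n P 0 k (S k) X n_neq0); cbv zeta.
  - intro H0. rewrite H0 in HD. lra.
  - apply oriented_mul_nonneg; [exact HD |]. pose proof (Hin k ltac:(lia)) as H.
    unfold edge_side, edge in H. unfold cross, vsub in *; simpl in *. lra.
  - apply oriented_mul_nonneg; [exact HD |].
    unfold f in HfSk. unfold cross, vsub in *; simpl in *. lra.
  - apply oriented_mul_nonneg; [exact HD |].
    unfold f in Hfk. unfold cross, vsub in *; simpl in *. lra.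
Qed.

Lemma side_nonneg_of_boundary X : boundary (conv_hull n P) X -> forall i, 0 <= side i X.
Proof.
  intros HB i. destruct (Rle_or_lt 0 (side i X)) as [| Hneg]; [assumption | exfalso].
  destruct (cross_small_near (Rabs (fst (e i)) + Rabs (snd (e i))) (- side i X))
    as [eps [Heps Hnear]]; [lra |].
  destruct (HB eps Heps) as [[Y [HY Hd]] _].
  pose proof (side_nonneg_of_hull i Y HY) as HiY. rewrite (side_shift i X) in HiY.
  pose proof (Rabs_def2 _ _ (Hnear (e i) X Y (Rle_refl _) Hd)).
  destruct orientation_sign as [Hs | Hs]; rewrite Hs in *; lra.
Qed.

Lemma boundary_on_edge_line X : boundary (conv_hull n P) X -> exists i, (i < n)%nat /\ side i X = 0.
Proof.
  intro HB. pose proof (side_nonneg_of_boundary X HB) as Hin.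
  apply NNPP. intro Hno.
  assert (Hpos : forall i, (i < n)%nat -> 0 < side i X).
  { intros i Hi. destruct (Hin i) as [| H0]; [assumption |]. exfalso. apply Hno. now exists i. }
  destruct (finite_pos_lower_bound (fun i => side i X) n Hpos) as [c [Hc Hcle]].
  destruct (finite_upper_bound (fun i => Rabs (fst (e i)) + Rabs (snd (e i))) n) as [K HK].
  destruct (cross_small_near K c Hc) as [eps [Heps Hnear]].
  destruct (HB eps Heps) as [_ [Y [HY Hd]]].
  apply HY, hull_of_side_nonneg. intros i Hi. rewrite (side_shift i X).
  pose proof (Rabs_def2 _ _ (Hnear (e i) X Y (HK i Hi) Hd)). pose proof (Hcle i Hi).
  destruct orientation_sign as [Hs | Hs]; rewrite Hs in *; lra.
Qed.

Lemma segment_of_side_zero X i :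
  (forall j, 0 <= side j X) -> side i X = 0 -> segment (V i) (V (S i)) X.
Proof.
  intros Hin H0.
  assert (Hc : cross (e i) (vsub X (V i)) = 0)
    by (unfold edge_side in H0; destruct orientation_sign as [Hs | Hs]; rewrite Hs in H0; lra).
  destruct (point_on_line (V i) X (e i) (edge_neq0 i) Hc) as [t [Hx Hy]].
  assert (Ht1 : 0 <= - (t - 1) * (s * cross (e i) (e (S i)))).
  { replace (- (t - 1) * (s * cross (e i) (e (S i)))) with (side (S i) X); [apply Hin |].
    unfold edge_side, edge, cross, vsub in *; simpl in *. rewrite Hx, Hy. ring. }
  set (j := (i + n - 1)%nat).
  assert (Ej : e j = vsub (V i) (V j))
    by (unfold edge; now rewrite (vtx_cong n P (S j) i (mod_pred_succ i))).
  assert (Ht0 : 0 <= t * (s * cross (e j) (e i))).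
  { replace (t * (s * cross (e j) (e i))) with (side j X); [apply Hin |].
    unfold edge_side. rewrite Ej. unfold cross, vsub in *; simpl in *. rewrite Hx, Hy. ring. }
  pose proof (turn_pos i). pose proof (turn_pos j).
  rewrite (edge_cong (S j) i (mod_pred_succ i)) in H1.
  exists t. split; [split; nra |]. unfold edge in Hx, Hy; simpl in Hx, Hy. split; lra.
Qed.

Lemma boundary_of_segment X i : segment (V i) (V (S i)) X -> boundary (conv_hull n P) X.
Proof.
  intros Hseg eps Heps. split.
  { exists X. split; [exact (hull_segment n P i (S i) X n_neq0 Hseg) |].
    unfold dist2. rewrite !Rminus_diag. nra. }
  destruct Hseg as [t [Ht [Hx Hy]]].
  set (q := fst (e i) ^ 2 + snd (e i) ^ 2).
  pose proof (sqnorm_pos _ (edge_neq0 i)) as Hq. fold q in Hq.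
  set (d := eps / (q + 1)). assert (Hd : 0 < d) by (apply Rdiv_lt_0_compat; lra).
  assert (Hs2 : s * s = 1) by (destruct orientation_sign as [-> | ->]; ring).
  exists (fst X + d * s * snd (e i), snd X - d * s * fst (e i)). split.
  - intro HY. pose proof (side_nonneg_of_hull i _ HY) as H.
    replace (side i (fst X + d * s * snd (e i), snd X - d * s * fst (e i)))
      with (- d * q * (s * s)) in H.
    + rewrite Hs2 in H. nra.
    + unfold q, edge_side, edge, cross, vsub in *; simpl in *. rewrite Hx, Hy. ring.
  - assert (Hdq : d * (q + 1) = eps) by (unfold d; field; lra).
    unfold dist2; cbn [fst snd].
    replace ((fst X - (fst X + d * s * snd (e i))) ^ 2 + (snd X - (snd X - d * s * fst (e i))) ^ 2)
      with (d * d * q * (s * s)) by (unfold q; ring).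
    rewrite Hs2, <- Hdq. nra.
Qed.

Lemma convex_of_convex_position : is_convex n P.
Proof.
  intro X. split.
  - intros [i [_ Hseg]]. exact (boundary_of_segment X i Hseg).
  - intro HB. destruct (boundary_on_edge_line X HB) as [i [Hi H0]].
    exists i. split; [exact Hi |].
    exact (segment_of_side_zero X i (side_nonneg_of_boundary X HB) H0).
Qed.

Lemma strictly_convex_of_convex_position : strictly_convex n P.
Proof. exact (conj strict_of_convex_position convex_of_convex_position). Qed.

Lemma wraps_vtx_above a j : wraps s (e a) (e (S a)) ->
  (j mod n <> a mod n)%nat -> (j mod n <> S a mod n)%nat -> (j mod n <> S (S a) mod n)%nat ->
  0 < s * (snd (V j) - snd (V (S a))).
Proof.
  intros Hw H1 H2 H3.
  apply (wraps_above s (e a) (e (S a)) (vsub (V j) (V (S a))) Hw (turn_pos a)).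
  - replace (cross (e a) (vsub (V j) (V (S a)))) with (cross (e a) (vsub (V j) (V a)))
      by (unfold edge, cross, vsub; simpl; ring).
    exact (side_vtx_pos a j H1 H2).
  - exact (side_vtx_pos (S a) j H2 H3).
Qed.

(* Two different wrapping turns would put [V (a+1)] and [V (b+1)] each strictly above
   the other. *)
Lemma wraps_unique a b : wraps s (e a) (e (S a)) -> wraps s (e b) (e (S b)) ->
  (a mod n = b mod n)%nat.
Proof.
  intros Ha Hb. destruct (Nat.eq_dec (a mod n) (b mod n)) as [| Hab]; [assumption | exfalso].
  assert (Hinj : forall x y, (x mod n <> y mod n)%nat -> (S x mod n <> S y mod n)%nat)
    by (intros x y Hxy h; exact (Hxy (mod_succ_inj n x y n_neq0 h))).
  destruct (Nat.eq_dec (b mod n) (S a mod n)) as [Hba | Hba].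
  { rewrite (edge_cong b (S a) Hba) in Hb. unfold wraps in Ha, Hb.
    destruct Ha as [[? ?] | [? ?]], Hb as [[? ?] | [? ?]]; (lra || tauto). }
  destruct (Nat.eq_dec (a mod n) (S b mod n)) as [Hab' | Hab'].
  { rewrite (edge_cong a (S b) Hab') in Ha. unfold wraps in Ha, Hb.
    destruct Ha as [[? ?] | [? ?]], Hb as [[? ?] | [? ?]]; (lra || tauto). }
  pose proof (wraps_vtx_above a (S b) Ha (not_eq_sym Hab') (Hinj b a (not_eq_sym Hab))
                (Hinj b (S a) Hba)).
  pose proof (wraps_vtx_above b (S a) Hb (not_eq_sym Hba) (Hinj a b Hab) (Hinj a (S b) Hab')).
  lra.
Qed.

Lemma argP_step_or_wraps i : s * argP n P i < s * argP n P (S i) \/ wraps s (e i) (e (S i)).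
Proof. apply arg_step_or_wraps; auto using orientation_sign, edge_neq0, turn_pos. Qed.

(* The arguments increase (for [s = 1]) along the cycle except at the unique wrapping
   turn [d -> d + 1], so the chain starts at [k = d + 1]. *)
Lemma c_strictly_monotone_of_convex_position : c_strictly_monotone n P.
Proof.
  split.
  { intros i _ Heq. apply (edge_neq0 i). unfold edge. rewrite Heq. unfold vsub. f_equal; ring. }
  destruct (exists_not_increasing (fun i => s * argP n P i) n ltac:(lia)) as [d [Hd Hnd]].
  { simpl. f_equal. apply argP_cong. rewrite Nat.Div0.mod_same, Nat.mod_small; lia. }
  assert (Hwd : wraps s (e d) (e (S d))) by (destruct (argP_step_or_wraps d); tauto).
  exists (S d mod n). split; [apply Nat.mod_upper_bound, n_neq0 |].
  assert (Hstep : forall j, (j + 1 < n)%nat ->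
            s * argP n P ((S d mod n + j) mod n) < s * argP n P ((S d mod n + j + 1) mod n)).
  { intros j Hj.
    rewrite (argP_cong ((S d mod n + j) mod n) (S (d + j))),
            (argP_cong ((S d mod n + j + 1) mod n) (S (S (d + j))))
      by (rewrite Nat.Div0.mod_mod, <- ?Nat.add_assoc, Nat.Div0.add_mod_idemp_l; f_equal; lia).
    destruct (argP_step_or_wraps (S (d + j))) as [| Hw]; [assumption | exfalso].
    apply (mod_add_neq n d (S j)); [lia |].
    rewrite <- (wraps_unique _ _ Hw Hwd). f_equal. lia. }
  destruct orientation_sign as [Hs | Hs]; rewrite Hs in Hstep; [left | right];
    intros j Hj; specialize (Hstep j Hj); lra.
Qed.

End Orientation.

Section StrictlyConvex.

Hypothesis strictly_convex_P : strictly_convex n P.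

Lemma cross_edge_neq0 i j : (j mod n <> i mod n)%nat -> (j mod n <> S i mod n)%nat ->
  cross (e i) (vsub (V j) (V i)) <> 0.
Proof.
  intros Hji HjSi H0.
  apply (proj1 strictly_convex_P (i mod n) (S i mod n) (j mod n));
    try (apply Nat.mod_upper_bound, n_neq0); auto.
  - intro h. exact (mod_succ_neq i (eq_sym h)).
  - exact (collinear_of_cross _ _ _ H0).
Qed.

Lemma midpoint_boundary i : boundary (conv_hull n P)
  ((fst (V i) + fst (V (S i))) / 2, (snd (V i) + snd (V (S i))) / 2).
Proof.
  apply (proj2 strictly_convex_P). exists (i mod n). split; [apply Nat.mod_upper_bound, n_neq0 |].
  rewrite vtx_mod, (vtx_cong n P (S (i mod n)) (S i)) by (apply mod_succ_cong, Nat.Div0.mod_mod).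
  exists (1 / 2). simpl. split; [lra | split; field].
Qed.

Lemma no_opposite_sides i j k :
  0 < cross (e i) (vsub (V j) (V i)) -> cross (e i) (vsub (V k) (V i)) < 0 -> False.
Proof.
  intros Hj Hk.
  destruct (hull_near_midpoint n P i (S i) j k n_neq0 Hj Hk) as [eps [Heps Hnear]].
  destruct (midpoint_boundary i eps Heps) as [_ [Y [HY Hd]]].
  exact (HY (Hnear Y Hd)).
Qed.

Lemma same_side i j k :
  (j mod n <> i mod n)%nat -> (j mod n <> S i mod n)%nat ->
  (k mod n <> i mod n)%nat -> (k mod n <> S i mod n)%nat ->
  0 < cross (e i) (vsub (V j) (V i)) * cross (e i) (vsub (V k) (V i)).
Proof.
  intros Hj1 Hj2 Hk1 Hk2.
  pose proof (cross_edge_neq0 i j Hj1 Hj2). pose proof (cross_edge_neq0 i k Hk1 Hk2).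
  pose proof (no_opposite_sides i j k). pose proof (no_opposite_sides i k j).
  destruct (Rlt_or_le 0 (cross (e i) (vsub (V j) (V i)))),
           (Rlt_or_le 0 (cross (e i) (vsub (V k) (V i)))); nra.
Qed.

(* The orientation is that of the first turn; [same_side] propagates it from each
   edge to the next, since [V i] lies off the edge [i + 1]. *)
Lemma convex_position_of_strictly_convex : exists s, convex_position n P s.
Proof.
  assert (Hsmall : forall m, (m < 3)%nat -> (m mod n = m)%nat)
    by (intros; apply Nat.mod_small; lia).
  set (c2 := cross (e 0) (vsub (V 2) (V 0))).
  set (s := if Rlt_dec 0 c2 then 1 else -1).
  assert (Hs : s = 1 \/ s = -1) by (unfold s; destruct (Rlt_dec 0 c2); auto).
  assert (Hc2 : 0 < s * c2).
  { pose proof (cross_edge_neq0 0 2 ltac:(rewrite !Hsmall; lia) ltac:(rewrite !Hsmall; lia)) as H.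
    fold c2 in H. unfold s; destruct (Rlt_dec 0 c2); lra. }
  exists s. split; [exact Hs |]. unfold edge_side.
  intro i. induction i as [| i IHi]; intros j Hj1 Hj2.
  - pose proof (same_side 0 j 2 Hj1 Hj2 ltac:(rewrite !Hsmall; lia)
                  ltac:(rewrite !Hsmall; lia)) as H.
    fold c2 in H. destruct Hs as [Hs | Hs]; rewrite Hs in *; nra.
  - pose proof (IHi (S (S i)) (mod_succ2_neq i) (mod_succ_neq (S i))) as Hprev.
    replace (cross (e i) (vsub (V (S (S i))) (V i)))
      with (cross (e (S i)) (vsub (V i) (V (S i)))) in Hprev
      by (unfold edge, cross, vsub; simpl; ring).
    pose proof (same_side (S i) i j (not_eq_sym (mod_succ_neq i))
                  (fun h => mod_succ2_neq i (eq_sym h)) Hj1 Hj2).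
    destruct Hs as [Hs | Hs]; rewrite Hs in *; nra.
Qed.

End StrictlyConvex.

Lemma cross_telescope u a d :
  cross u (vsub (V (a + d)) (V a)) = sumR d (fun m => cross u (e (a + m)%nat)).
Proof.
  induction d as [| d IHd]; cbn [sumR].
  - rewrite Nat.add_0_r. unfold cross, vsub; simpl. ring.
  - rewrite <- IHd, Nat.add_succ_r. unfold edge, cross, vsub; simpl. ring.
Qed.

Section IncreasingArgs.

Variables (s : R) (k : nat).
Hypothesis sign_s : s = 1 \/ s = -1.
Hypothesis edges_neq0 : forall i, e i <> (0, 0).
Hypothesis args_increase :
  forall j, (j + 1 < n)%nat -> s * argP n P (k + j) < s * argP n P (k + S j).

Let A q := s * argP n P (k + q).

Lemma turn_sign_once p m1 m2 : (p < n)%nat -> (1 <= m1)%nat -> (m1 < m2 < n)%nat ->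
  s * cross (e (k + p)) (e (k + p + m1)) <= 0 -> s * cross (e (k + p)) (e (k + p + m2)) < 0.
Proof.
  intros Hp Hm1 Hm2 Ht1.
  assert (Hpolar : forall m, s * cross (e (k + p)) (e (k + p + m))
                   = vnorm (e (k + p)) * vnorm (e (k + p + m)) * sin (A (p + m)%nat - A p)).
  { intro m. unfold A. rewrite !argP_edge, Nat.add_assoc. apply oriented_cross_polar; auto. }
  rewrite Hpolar in Ht1 |- *.
  pose proof (vnorm_pos _ (edges_neq0 (k + p))).
  pose proof (vnorm_pos _ (edges_neq0 (k + p + m1))).
  pose proof (vnorm_pos _ (edges_neq0 (k + p + m2))).
  assert (sin (A (p + m1)%nat - A p) <= 0).
  { apply Rnot_lt_le. intro Hsin.
    assert (0 < vnorm (e (k + p)) * vnorm (e (k + p + m1)%nat) * sin (A (p + m1)%nat - A p))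
      by (repeat apply Rmult_lt_0_compat; assumption). lra. }
  assert (0 < vnorm (e (k + p)) * vnorm (e (k + p + m2)%nat))
    by (apply Rmult_lt_0_compat; assumption).
  assert (sin (A (p + m2)%nat - A p) < 0); [| nra].
  apply (sin_sign_changes_once A n p m1); auto.
  - intro q. unfold A. f_equal. apply argP_cong. rewrite Nat.add_assoc.
    replace (k + q + n)%nat with (k + q + 1 * n)%nat by lia. apply Nat.Div0.mod_add.
  - intros q Hq. apply args_increase. lia.
  - unfold A. pose proof (arg_spec _ (edges_neq0 (k + (n - 1)))).
    pose proof (arg_spec _ (edges_neq0 (k + 0))).
    rewrite !argP_edge. destruct sign_s as [-> | ->]; lra.
Qed.

Lemma convex_position_of_increasing_args : convex_position n P s.
Proof.
  split; [exact sign_s |]. intros i j Hj1 Hj2.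
  destruct (mod_offset n k i n_neq0) as [p [Hp Ep]].
  destruct (mod_offset n i j n_neq0) as [d [Hd Ed]].
  assert (d <> 0%nat) by (intros ->; rewrite Nat.add_0_r in Ed; auto).
  assert (d <> 1%nat) by (intros ->; rewrite Nat.add_1_r in Ed; auto).
  unfold edge_side. rewrite (edge_cong i (k + p)), (vtx_cong n P i (k + p)) by auto.
  rewrite (vtx_cong n P j (k + p + d)) by (rewrite <- Ed; apply mod_add_cong; auto).
  rewrite cross_telescope, <- sumR_scale.
  apply (partial_sums_pos _ n d).
  - rewrite Nat.add_0_r. unfold cross. ring.
  - rewrite sumR_scale, <- cross_telescope, (vtx_cong n P (k + p + n) (k + p)).
    + unfold cross, vsub. simpl. ring.
    + replace (k + p + n)%nat with (k + p + 1 * n)%nat by lia. apply Nat.Div0.mod_add.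
  - intros m1 m2 Hm1 Hm2. apply turn_sign_once; assumption.
  - lia.
Qed.

End IncreasingArgs.

Lemma convex_position_of_c_strictly_monotone :
  c_strictly_monotone n P -> exists s, convex_position n P s.
Proof.
  intros [Hlocal [k [Hk Hchain]]].
  assert (Hnz : forall i, e i <> (0, 0)).
  { intros i He. rewrite (edge_cong i (i mod n)) in He by (symmetry; apply Nat.Div0.mod_mod).
    apply (Hlocal (i mod n) (Nat.mod_upper_bound i n n_neq0)).
    unfold edge, vsub in He. injection He as h1 h2.
    destruct (V (i mod n)), (V (S (i mod n))). simpl in *. f_equal; lra. }
  assert (Hmod : forall j, argP n P ((k + j) mod n) = argP n P (k + j) /\
                           argP n P ((k + j + 1) mod n) = argP n P (k + S j))
    by (intro j; split; apply argP_cong; rewrite Nat.Div0.mod_mod; f_equal; lia).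
  destruct Hchain as [Hinc | Hdec]; [exists 1 | exists (-1)];
    apply (convex_position_of_increasing_args _ k); auto;
    intros j Hj; destruct (Hmod j) as [E1 E2];
    [specialize (Hinc j Hj) | specialize (Hdec j Hj)]; rewrite E1, E2 in *; lra.
Qed.

End Polygon.

Theorem theorem1p12 (n : nat) (P : nat -> point) (hn : (3 <= n)%nat) :
  strictly_convex n P <-> c_strictly_monotone n P.
Proof.
  split.
  - intro Hconvex.
    destruct (convex_position_of_strictly_convex n P hn Hconvex) as [s Hs].
    exact (c_strictly_monotone_of_convex_position n P hn s Hs).
  - intro Hmono.
    destruct (convex_position_of_c_strictly_monotone n P hn Hmono) as [s Hs].
    exact (strictly_convex_of_convex_position n P hn s Hs).
Qed.
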